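(* Let $E=\tfrac12(\mathbb 1+\vec e\cdot\vec\sigma)$ be an unbiased qubit effect with $\|\vec e\|<1$, and let $B=\tfrac12(b^0\mathbb 1+\vec b\cdot\vec\sigma)$ be any qubit effect. If the two-outcome POVMs $(E,\mathbb 1-E)$ and $(B,\mathbb 1-B)$ are jointly measurable, then $$\|\vec e\|^2+\|\vec b\|^2-(\vec e\cdot\vec b)^2\le 1,$$ equivalently $\|\vec e+\vec b\|+\|\vec e-\vec b\|\le 2$. Conversely, if $B$ is also unbiased ($b^0=1$) and $\|\vec e\|^2+\|\vec b\|^2\le 1+(\vec e\cdot\vec b)^2$, then $(E,\mathbb 1-E)$ and $(B,\mathbb 1-B)$ are jointly measurable.
   Context: $\vec\sigma=(\sigma_1,\sigma_2,\sigma_3)$ are the Pauli matrices, $\sigma_1=\begin{pmatrix}0&1\\1&0\end{pmatrix}$, $\sigma_2=\begin{pmatrix}0&-i\\i&0\end{pmatrix}$, $\sigma_3=\begin{pmatrix}1&0\\0&-1\end{pmatrix}$. A qubit effect is a $2\times 2$ matrix $E$ with $0\le E\le\mathbb 1$; every effect can be written $E=\tfrac12(e^0\mathbb 1+\vec e\cdot\vec\sigma)$ with $(e^0,\vec e)\in\mathbb R^4$, $\|\vec e\|\le\min\{e^0,2-e^0\}$; it is unbiased if $e^0=1$. Joint measurability of two POVMs $(E_i)$, $(B_j)$: existence of a POVM $(N_{ij})$ with $\sum_jN_{ij}=E_i$, $\sum_iN_{ij}=B_j$. *)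

From HB Require Import structures.
From mathcomp Require Import all_boot all_order all_algebra.
From mathcomp.real_closed Require Import complex.
Set Implicit Arguments. Unset Strict Implicit. Unset Printing Implicit Defensive.
Import Order.TTheory GRing.Theory Num.Theory.
Local Open Scope ring_scope.
Local Open Scope complex_scope.

Section Qubit.
Variable R : rcfType.

Definition adjmx m n (A : 'M[R[i]]_(m, n)) : 'M[R[i]]_(n, m) :=
  \matrix_(i, j) conjc (A j i).

(* Positive semidefinite 2x2 complex matrix: <v, A v> >= 0 for all v
   (in R[i], 0 <= z means z is real and nonnegative). *)
Definition psd (A : 'M[R[i]]_2) : Prop :=
  forall v : 'cV[R[i]]_2, 0 <= (adjmx v *m A *m v) 0 0.

Definition loewner_le (A B : 'M[R[i]]_2) : Prop := psd (B - A).

Definition is_effect (E : 'M[R[i]]_2) : Prop := loewner_le 0 E /\ loewner_le E 1.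

Definition sigma1 : 'M[R[i]]_2 :=
  \matrix_(i < 2, j < 2) (if i == j then 0 else 1).
Definition sigma2 : 'M[R[i]]_2 :=
  \matrix_(i < 2, j < 2)
    (if i == j then 0 else if (i == 0 :> nat) then - 'i else 'i).
Definition sigma3 : 'M[R[i]]_2 :=
  \matrix_(i < 2, j < 2)
    (if i == j then (if (i == 0 :> nat) then 1 else -1) else 0).

Definition pauli (k : 'I_3) : 'M[R[i]]_2 :=
  if (k == 0 :> nat) then sigma1 else if (k == 1 :> nat) then sigma2 else sigma3.

Definition qubit_op (e0 : R) (e : 'rV[R]_3) : 'M[R[i]]_2 :=
  (2%:R)^-1 *: (e0%:C%:M + \sum_(k < 3) (e 0 k)%:C *: pauli k).

Definition dot3 (e b : 'rV[R]_3) : R := \sum_(k < 3) e 0 k * b 0 k.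
Definition norm3 (e : 'rV[R]_3) : R := Num.sqrt (dot3 e e).

Definition is_povm (I : finType) (M : I -> 'M[R[i]]_2) : Prop :=
  (forall x, loewner_le 0 (M x)) /\ \sum_x M x = 1.

Definition jointly_measurable (I J : finType)
    (E : I -> 'M[R[i]]_2) (B : J -> 'M[R[i]]_2) : Prop :=
  exists N : I -> J -> 'M[R[i]]_2,
    is_povm (fun p : I * J => N p.1 p.2) /\
    (forall x, \sum_y N x y = E x) /\ (forall y, \sum_x N x y = B y).

Definition binpovm (A : 'M[R[i]]_2) : bool -> 'M[R[i]]_2 :=
  fun b => if b then A else 1 - A.

End Qubit.

(* Joint measurability of the binary POVMs (A, 1 - A) and (B, 1 - B) amounts to
   an operator M with 0 <= M <= A, B and A + B - 1 <= M.  For M >= 0 the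
   operator (1/2)(c 1 + v.sigma) + M can only be positive if |v| <= c + 2 tr M:
   evaluate it on a pure state with Bloch vector -v/|v| and M on the orthogonal
   state.  Applied to M and 1 - E - B + M this gives |e + b| <= 1 - b0 + 2 tr M,
   applied to E - M and B - M it gives |e - b| <= 1 + b0 - 2 tr M; adding them,
   |e + b| + |e - b| <= 2.  Conversely, when b0 = 1 that inequality makes
   M = (1/2)(|e + b|/2 1 + (e + b)/2 . sigma) a valid joint POVM element.
   The two forms of the criterion are equivalent by elementary algebra once
   |e|^2 + |b|^2 <= 2. *)

From HB Require Import structures.
From mathcomp Require Import all_boot all_order all_algebra.
From mathcomp.real_closed Require Import complex.
From mathcomp Require Import ring lra.
Set Implicit Arguments. Unset Strict Implicit. Unset Printing Implicit Defensive.
Import Order.TTheory GRing.Theory Num.Theory.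
Local Open Scope ring_scope.
Local Open Scope complex_scope.

Section Qubit.
Variable R : rcfType.
Implicit Types (a b c d : R) (u v w : 'rV[R]_3) (X Y M : 'M[R[i]]_2) (psi : 'cV[R[i]]_2).

Lemma lift0_ord3 : (lift ord0 ord0 = 1 :> 'I_3) * (lift ord0 (lift ord0 ord0) = 2%:R :> 'I_3).
Proof. by split; apply/val_inj. Qed.

Lemma ord3P (k : 'I_3) : [\/ k = 0, k = 1 | k = 2%:R].
Proof.
by case: k => [[|[|[|//]]] ?]; [constructor 1 | constructor 2 | constructor 3]; apply/val_inj.
Qed.

Lemma dot3E v w : dot3 v w = v 0 0 * w 0 0 + v 0 1 * w 0 1 + v 0 2%:R * w 0 2%:R.
Proof. by rewrite /dot3 !big_ord_recl big_ord0 addr0 addrA !lift0_ord3. Qed.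

Lemma dot3_ge0 v : 0 <= dot3 v v.
Proof. by apply: sumr_ge0 => k _; rewrite -expr2 sqr_ge0. Qed.

Lemma sqr_norm3 v : norm3 v ^+ 2 = dot3 v v.
Proof. by rewrite sqr_sqrtr // dot3_ge0. Qed.

Lemma norm3_ge0 v : 0 <= norm3 v.
Proof. exact: sqrtr_ge0. Qed.

Lemma dot3Zr a v w : dot3 v (a *: w) = a * dot3 v w.
Proof. by rewrite !dot3E !mxE; ring. Qed.

Lemma norm3Z a v : norm3 (a *: v) = `|a| * norm3 v.
Proof.
rewrite /norm3.
have -> : dot3 (a *: v) (a *: v) = a ^+ 2 * dot3 v v by rewrite !dot3E !mxE; ring.
by rewrite sqrtrM ?sqr_ge0 // sqrtr_sqr.
Qed.

Lemma norm3N v : norm3 (- v) = norm3 v.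
Proof. by rewrite -scaleN1r norm3Z normrN1 mul1r. Qed.

Lemma sqr_norm3D v w : norm3 (v + w) ^+ 2 = norm3 v ^+ 2 + norm3 w ^+ 2 + 2 * dot3 v w.
Proof. by rewrite !sqr_norm3 !dot3E !mxE; ring. Qed.

Lemma sqr_norm3B v w : norm3 (v - w) ^+ 2 = norm3 v ^+ 2 + norm3 w ^+ 2 - 2 * dot3 v w.
Proof. by rewrite !sqr_norm3 !dot3E !mxE; ring. Qed.

(* Lagrange's identity: the defect is the squared norm of the cross product. *)
Lemma sqr_dot3_le v w : dot3 v w ^+ 2 <= norm3 v ^+ 2 * norm3 w ^+ 2.
Proof.
rewrite !sqr_norm3 !dot3E -subr_ge0.
set x := v 0 0; set y := v 0 1; set z := v 0 2%:R.
set x' := w 0 0; set y' := w 0 1; set z' := w 0 2%:R.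
have -> : (x * x + y * y + z * z) * (x' * x' + y' * y' + z' * z')
  - (x * x' + y * y' + z * z') ^+ 2
  = (y * z' - z * y') ^+ 2 + (z * x' - x * z') ^+ 2 + (x * y' - y * x') ^+ 2 by ring.
by rewrite !addr_ge0 ?sqr_ge0.
Qed.

Lemma normr_dot3_le v w : `|dot3 v w| <= norm3 v * norm3 w.
Proof.
rewrite -ler_sqr ?nnegrE ?mulr_ge0 ?norm3_ge0 //.
by rewrite real_normK ?num_real // exprMn sqr_dot3_le.
Qed.

Ltac qubit_op_entry :=
  rewrite /qubit_op !mxE !big_ord_recl big_ord0 /pauli /= !mxE /= !lift0_ord3;
  simpc; apply/eqP; rewrite eq_complex /=; apply/andP; split; apply/eqP; by field.

Lemma qubit_op00 c v : qubit_op c v 0 0 = ((c + v 0 2%:R) / 2)%:C.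
Proof. qubit_op_entry. Qed.
Lemma qubit_op11 c v : qubit_op c v 1 1 = ((c - v 0 2%:R) / 2)%:C.
Proof. qubit_op_entry. Qed.
Lemma qubit_op01 c v : qubit_op c v 0 1 = (v 0 0 / 2) -i* (v 0 1 / 2).
Proof. qubit_op_entry. Qed.
Lemma qubit_op10 c v : qubit_op c v 1 0 = (v 0 0 / 2) +i* (v 0 1 / 2).
Proof. qubit_op_entry. Qed.

Lemma qubit_opD c c' v v' : qubit_op (c + c') (v + v') = qubit_op c v + qubit_op c' v'.
Proof.
rewrite /qubit_op -scalerDr addrACA -big_split rmorphD (raddfD (@scalar_mx _ 2)).
by congr (_ *: (_ + _)); apply: eq_bigr => k _; rewrite mxE rmorphD scalerDl.
Qed.

Lemma qubit_opN c v : qubit_op (- c) (- v) = - qubit_op c v.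
Proof.
rewrite /qubit_op -scalerN opprD -sumrN rmorphN (raddfN (@scalar_mx _ 2)).
by congr (_ *: (_ + _)); apply: eq_bigr => k _; rewrite mxE rmorphN scaleNr.
Qed.

Lemma qubit_opB c c' v v' : qubit_op (c - c') (v - v') = qubit_op c v - qubit_op c' v'.
Proof. by rewrite qubit_opD qubit_opN. Qed.

Lemma qubit_op1 : qubit_op (2 : R) 0 = 1.
Proof.
rewrite /qubit_op big1 => [|k _]; last by rewrite mxE scale0r.
by rewrite addr0 -scalemx1 scalerA rmorph_nat mulVf ?pnatr_eq0 // scale1r.
Qed.

Lemma trace_pauli k : \tr (pauli R k) = 0.
Proof.
rewrite /mxtrace !big_ord_recl big_ord0 /pauli.
by case: k => [[|[|[|//]]] ?]; rewrite !mxE /= ?addr0 ?subrr.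
Qed.

Lemma trace_qubit_op c v : \tr (qubit_op c v) = c%:C.
Proof.
rewrite /qubit_op mxtraceZ mxtraceD mxtrace_scalar raddf_sum /= big1 => [|k _].
  by rewrite addr0 -(mulr_natl c%:C) mulrA mulVf ?pnatr_eq0 ?mul1r.
by rewrite mxtraceZ trace_pauli mulr0.
Qed.

Definition spinor a b c d : 'cV[R[i]]_2 :=
  \col_k (if k == 0 then a +i* b else c +i* d).

Definition expect X psi : R[i] := (adjmx psi *m X *m psi) 0 0.

Lemma spinor_surj psi : exists a b c d, psi = spinor a b c d.
Proof.
case E0 : (psi 0 0) => [a b]; case E1 : (psi 1 0) => [c d]; exists a, b, c, d.
apply/matrixP => i j; rewrite !mxE (ord1 j).
by case: i => [[|[|//]] ?] /=; [rewrite -E0 | rewrite -E1]; congr (psi _ _); apply/val_inj.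
Qed.

Lemma expect_spinor X a b c d : expect X (spinor a b c d) =
  (a -i* b) * X 0 0 * (a +i* b) + (a -i* b) * X 0 1 * (c +i* d)
  + (c -i* d) * X 1 0 * (a +i* b) + (c -i* d) * X 1 1 * (c +i* d).
Proof.
rewrite /expect !mxE !big_ord_recl !big_ord0 /= !mxE !big_ord_recl !big_ord0 /= !mxE /=.
have -> : lift ord0 ord0 = 1 :> 'I_2 by apply/val_inj.
by ring.
Qed.

Definition bloch a b c d : 'rV[R]_3 :=
  \row_(k < 3) [:: 2 * (a * c + b * d); 2 * (a * d - b * c);
                   a ^+ 2 + b ^+ 2 - c ^+ 2 - d ^+ 2]`_k.

Lemma dot3_bloch v a b c d : dot3 v (bloch a b c d) =
  v 0 0 * (2 * (a * c + b * d)) + v 0 1 * (2 * (a * d - b * c))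
  + v 0 2%:R * (a ^+ 2 + b ^+ 2 - c ^+ 2 - d ^+ 2).
Proof. by rewrite dot3E !mxE. Qed.

Lemma norm3_bloch a b c d : norm3 (bloch a b c d) = a ^+ 2 + b ^+ 2 + c ^+ 2 + d ^+ 2.
Proof.
rewrite /norm3 dot3_bloch !mxE /=.
rewrite -[RHS]ger0_norm ?addr_ge0 ?sqr_ge0 // -sqrtr_sqr.
by congr Num.sqrt; ring.
Qed.

Lemma expect_qubit_op c0 v a b c d : expect (qubit_op c0 v) (spinor a b c d) =
  ((c0 * (a ^+ 2 + b ^+ 2 + c ^+ 2 + d ^+ 2) + dot3 v (bloch a b c d)) / 2)%:C.
Proof.
rewrite expect_spinor qubit_op00 qubit_op01 qubit_op10 qubit_op11 dot3_bloch.
simpc; apply/eqP; rewrite eq_complex /=; apply/andP; split; apply/eqP; by field.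
Qed.

(* [spinor (- c) d a (- b)] is orthogonal to [spinor a b c d] and of the same norm. *)
Lemma Re_expect_add_perp X a b c d :
  complex.Re (expect X (spinor a b c d)) + complex.Re (expect X (spinor (- c) d a (- b)))
  = (a ^+ 2 + b ^+ 2 + c ^+ 2 + d ^+ 2) * complex.Re (\tr X).
Proof.
rewrite !expect_spinor /mxtrace !big_ord_recl big_ord0.
have -> : lift ord0 ord0 = 1 :> 'I_2 by apply/val_inj.
move: (X 0 0) (X 0 1) (X 1 0) (X 1 1) => [x1 y1] [x2 y2] [x3 y3] [x4 y4].
by simpc; rewrite /=; ring.
Qed.

(* The spinor (cos t/2, e^(i p) sin t/2) written without trigonometry. *)
Lemma bloch_onto_upper (x y z : R) : x ^+ 2 + y ^+ 2 + z ^+ 2 = 1 -> 0 <= z ->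
  exists a c d, [/\ 2 * (a * c) = x, 2 * (a * d) = y & a ^+ 2 - c ^+ 2 - d ^+ 2 = z].
Proof.
move=> xyz z0; pose a : R := Num.sqrt ((1 + z) / 2).
have a2 : a ^+ 2 = (1 + z) / 2 by rewrite sqr_sqrtr // divr_ge0 //; lra.
have a0 : a != 0 by rewrite -sqrf_eq0 a2; apply/lt0r_neq0; lra.
exists a, (x / (2 * a)), (y / (2 * a)); split; [by field | by field |].
have -> : a ^+ 2 - (x / (2 * a)) ^+ 2 - (y / (2 * a)) ^+ 2
        = a ^+ 2 - (x ^+ 2 + y ^+ 2) / (4 * a ^+ 2) by field.
have -> : x ^+ 2 + y ^+ 2 = (1 - z) * (1 + z).
  by apply: (addIr (z ^+ 2)); rewrite xyz; ring.
by rewrite a2; field; lra.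
Qed.

Lemma bloch_onto u : norm3 u = 1 -> exists a b c d, bloch a b c d = u.
Proof.
move=> u1; have := sqr_norm3 u; rewrite u1 expr1n dot3E -!expr2 => /esym xyz.
have rowE a b c d : [/\ 2 * (a * c + b * d) = u 0 0, 2 * (a * d - b * c) = u 0 1
    & a ^+ 2 + b ^+ 2 - c ^+ 2 - d ^+ 2 = u 0 2%:R] -> bloch a b c d = u.
  by case=> ? ? ?; apply/rowP => k; rewrite !mxE; case: (ord3P k) => [] ->.
have [z0 | z0] := leP 0 (u 0 2%:R).
  have [a [c [d [? ? ?]]]] := bloch_onto_upper xyz z0.
  by exists a, 0, c, d; apply: rowE; split; rewrite // ?expr0n ?mul0r ?addr0 ?subr0.
have [||a [c [d [hx hy hz]]]] := @bloch_onto_upper (u 0 0) (u 0 1) (- u 0 2%:R).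
- by rewrite sqrrN.
- by rewrite oppr_ge0 ltW.
(* Swapping the two components of a spinor flips the third Bloch coordinate. *)
exists c, (- d), a, 0; apply: rowE; split; first by rewrite -hx; ring.
  by rewrite -hy; ring.
by apply: oppr_inj; rewrite -hz; ring.
Qed.

Lemma bloch_opposite v :
  exists a b c d, a ^+ 2 + b ^+ 2 + c ^+ 2 + d ^+ 2 = 1 /\ dot3 v (bloch a b c d) = - norm3 v.
Proof.
have [v0 | v0] := eqVneq (norm3 v) 0.
  exists 1, 0, 0, 0; split; first by ring.
  apply/eqP; rewrite v0 oppr0 -normr_le0.
  by have := normr_dot3_le v (bloch 1 0 0 0); rewrite v0 mul0r.
have u1 : norm3 (- (norm3 v)^-1 *: v) = 1.
  by rewrite norm3Z normrN ger0_norm ?invr_ge0 ?norm3_ge0 // mulVf.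
have [a [b [c [d hu]]]] := bloch_onto u1.
exists a, b, c, d; split; first by rewrite -norm3_bloch hu.
by rewrite hu dot3Zr -sqr_norm3; field.
Qed.

Lemma expectD X Y psi : expect (X + Y) psi = expect X psi + expect Y psi.
Proof. by rewrite /expect mulmxDr mulmxDl mxE. Qed.

Lemma psd_Re_expect_ge0 X psi : psd X -> 0 <= complex.Re (expect X psi).
Proof. by move=> /(_ psi); rewrite lecE => /andP[]. Qed.

Lemma psd_qubit_op c v : norm3 v <= c -> psd (qubit_op c v).
Proof.
move=> vc psi; have [a [b [c' [d ->]]]] := spinor_surj psi.
rewrite -/(expect _ _) expect_qubit_op ler0c divr_ge0 //.
have := normr_dot3_le v (bloch a b c' d); rewrite norm3_bloch ler_norml => /andP[].
set n := a ^+ 2 + b ^+ 2 + c' ^+ 2 + d ^+ 2.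
have : norm3 v * n <= c * n by rewrite ler_wpM2r ?addr_ge0 ?sqr_ge0.
lra.
Qed.

Lemma psd_qubit_op_add_norm3_le M c v : psd M -> psd (qubit_op c v + M) ->
  norm3 v <= c + 2 * complex.Re (\tr M).
Proof.
move=> M0 cvM; have [a [b [c' [d [n1 hv]]]]] := bloch_opposite v.
have hM := psd_Re_expect_ge0 (spinor (- c') d a (- b)) M0.
have := psd_Re_expect_ge0 (spinor a b c' d) cvM.
rewrite expectD raddfD /= expect_qubit_op n1 hv /=.
have := Re_expect_add_perp M a b c' d; rewrite n1 mul1r.
lra.
Qed.

Lemma jointly_measurable_binpovmP (A B : 'M[R[i]]_2) :
  jointly_measurable (binpovm A) (binpovm B) <->
  exists M, [/\ psd M, psd (A - M), psd (B - M) & psd (1 - A - B + M)].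
Proof.
split.
  case=> N [[N0 _] [NA NB]]; exists (N true true).
  have psdN x y : psd (N x y) by have := N0 (x, y); rewrite /loewner_le subr0.
  have := NA true; have := NA false; have := NB true; rewrite !big_bool /= => hB hA' hA.
  have -> : A - N true true = N true false.
    by rewrite -hA; apply/matrixP => i j; rewrite !mxE; ring.
  have -> : B - N true true = N false true.
    by rewrite -hB; apply/matrixP => i j; rewrite !mxE; ring.
  have -> : 1 - A - B + N true true = N false false.
    by rewrite -hA' -hB; apply/matrixP => i j; rewrite !mxE; ring.
  by split.
case=> M [M0 AM BM ABM].
pose N x y := if x then (if y then M else A - M) else (if y then B - M else 1 - A - B + M).
exists N; split; [split | split].
- by case=> [[] []]; rewrite /loewner_le subr0.
- by rewrite -pair_bigA !big_bool /=; apply/matrixP => i j; rewrite !mxE; ring.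
- by case; rewrite big_bool /=; apply/matrixP => i j; rewrite !mxE; ring.
- by case; rewrite big_bool /=; apply/matrixP => i j; rewrite !mxE; ring.
Qed.

Lemma norm3_half v : norm3 (2^-1 *: v) = norm3 v / 2.
Proof. by rewrite norm3Z ger0_norm ?invr_ge0 ?ler0n // mulrC. Qed.

Lemma sum_le2E (s d P q : R) : 0 <= s -> 0 <= d ->
  s ^+ 2 = P + 2 * q -> d ^+ 2 = P - 2 * q ->
  (s + d <= 2) = (P <= 2) && (P - q ^+ 2 <= 1).
Proof.
move=> s0 d0 hs hd.
have sd2 : (s * d) ^+ 2 = P ^+ 2 - 4 * q ^+ 2 by rewrite exprMn hs hd; ring.
apply/idP/andP => [sd | [P2 Pq]].
  have P2 : P <= 2 by nra.
  have : s * d <= 2 - P by nra.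
  by rewrite -ler_sqr ?nnegrE ?mulr_ge0 ?subr_ge0 // sd2 => h; split => //; lra.
have sdP : s * d <= 2 - P by rewrite -ler_sqr ?nnegrE ?mulr_ge0 ?subr_ge0 // sd2; lra.
by rewrite -ler_sqr ?nnegrE ?addr_ge0 //; nra.
Qed.

Lemma norm3D_add_norm3B_le2 u v :
  (norm3 (u + v) + norm3 (u - v) <= 2) =
  (norm3 u ^+ 2 + norm3 v ^+ 2 <= 2) && (norm3 u ^+ 2 + norm3 v ^+ 2 - dot3 u v ^+ 2 <= 1).
Proof. by rewrite (sum_le2E _ _ (sqr_norm3D u v) (sqr_norm3B u v)) ?norm3_ge0. Qed.

Lemma jointly_measurable_qubit_norm3_le (e b : 'rV[R]_3) b0 :
  jointly_measurable (binpovm (qubit_op 1 e)) (binpovm (qubit_op b0 b)) ->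
  norm3 (e + b) + norm3 (e - b) <= 2.
Proof.
case/jointly_measurable_binpovmP => M [M0 EM BM EBM].
have hs : norm3 (- (e + b)) <= 1 - b0 + 2 * complex.Re (\tr M).
  apply: psd_qubit_op_add_norm3_le M0 _.
  rewrite (_ : qubit_op _ _ = 1 - qubit_op 1 e - qubit_op b0 b) //.
  by rewrite -qubit_op1 -!qubit_opB sub0r opprD; congr qubit_op; ring.
have hd : norm3 (b - e) <= b0 - 1 + 2 * complex.Re (\tr (qubit_op 1 e - M)).
  by apply: psd_qubit_op_add_norm3_le EM _; rewrite qubit_opB addrA subrK.
rewrite norm3N in hs; rewrite -opprB norm3N !raddfB /= trace_qubit_op /= in hd.
lra.
Qed.

Lemma norm3_le_jointly_measurable_qubit (e b : 'rV[R]_3) :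
  norm3 (e + b) + norm3 (e - b) <= 2 ->
  jointly_measurable (binpovm (qubit_op 1 e)) (binpovm (qubit_op 1 b)).
Proof.
move=> hsd; apply/jointly_measurable_binpovmP.
exists (qubit_op (norm3 (e + b) / 2) (2^-1 *: (e + b))); split.
- by apply: psd_qubit_op; rewrite norm3_half.
- rewrite -qubit_opB; apply: psd_qubit_op.
  rewrite (_ : _ - _ = 2^-1 *: (e - b)) ?norm3_half; first lra.
  by apply/rowP => k; rewrite !mxE; field.
- rewrite -qubit_opB; apply: psd_qubit_op.
  rewrite (_ : _ - _ = - (2^-1 *: (e - b))) ?norm3N ?norm3_half; first lra.
  by apply/rowP => k; rewrite !mxE; field.
- rewrite -qubit_op1 -!qubit_opB -qubit_opD; apply: psd_qubit_op.
  rewrite (_ : _ + _ = - (2^-1 *: (e + b))) ?norm3N ?norm3_half.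
    by have := norm3_ge0 (e - b); lra.
  by apply/rowP => k; rewrite !mxE; field.
Qed.

End Qubit.

Unset Implicit Arguments.

Theorem mainTheorem3 (R : rcfType) (e : 'rV[R]_3) :
  norm3 e < 1 ->
  (forall (b0 : R) (b : 'rV[R]_3),
     is_effect (qubit_op b0 b) ->
     jointly_measurable (binpovm (qubit_op 1 e)) (binpovm (qubit_op b0 b)) ->
     norm3 e ^+ 2 + norm3 b ^+ 2 - dot3 e b ^+ 2 <= 1 /\
     norm3 (e + b) + norm3 (e - b) <= 2) /\
  (forall b : 'rV[R]_3,
     is_effect (qubit_op 1 b) ->
     norm3 e ^+ 2 + norm3 b ^+ 2 <= 1 + dot3 e b ^+ 2 ->
     jointly_measurable (binpovm (qubit_op 1 e)) (binpovm (qubit_op 1 b))).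
Proof.
move=> e1; split=> [b0 b _ /jointly_measurable_qubit_norm3_le sd | b _ hP].
  by split=> //; move: sd; rewrite norm3D_add_norm3B_le2 => /andP[].
apply: norm3_le_jointly_measurable_qubit; rewrite norm3D_add_norm3B_le2.
have e2 : norm3 e ^+ 2 < 1 by rewrite expr_lt1 ?norm3_ge0.
have := sqr_dot3_le e b; have := norm3_ge0 b => nb cs.
have b2 : norm3 b ^+ 2 <= 1 by nra.
by apply/andP; split; lra.
Qed.
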